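(* Let $(\Omega,\mathcal{A},\mathbb{P})$ be a probability space and let $\mathcal{X}:\Omega\to\mathcal{F}_c(\mathbb{R})$ be a fuzzy random variable (no integrability assumption). Then for every support median $A\in\mathrm{Med}_s(\mathcal{X})$ and every $\alpha\in[0,1]$ we have $A_\alpha\subseteq(\mathrm{med}_{Gr}(\mathcal{X}))_\alpha$.
   Context: For a function $A:\mathbb{R}\to[0,1]$, its $\alpha$-levels are $A_\alpha=\{x: A(x)\ge\alpha\}$ for $\alpha\in(0,1]$ and $A_0$ is the closure of $\{x:A(x)>0\}$. $\mathcal{F}_c(\mathbb{R})$ is the set of such $A$ all of whose $\alpha$-levels are non-empty compact intervals. The support function of $A\in\mathcal{F}_c(\mathbb{R})$ is $s_A(u,\alpha)=\sup\{u v: v\in A_\alpha\}$ for $u\in\mathbb{S}^0=\{-1,1\}$, $\alpha\in[0,1]$; thus $A_\alpha=[-s_A(-1,\alpha),s_A(1,\alpha)]$. A fuzzy random variable is a map $\mathcal{X}:\Omega\to\mathcal{F}_c(\mathbb{R})$ such that for each $\alpha\in[0,1]$ the map $\omega\mapsto\mathcal{X}(\omega)_\alpha$ is a random compact set (i.e. $\{\omega:\mathcal{X}(\omega)_\alpha\cap K\neq\emptyset\}\in\mathcal{A}$ for every non-empty compact convex $K$); then $s_{\mathcal{X}}(u,\alpha)(\omega)=s_{\mathcal{X}(\omega)}(u,\alpha)$ is a real random variable. For a real random variable $X$, $\mathrm{Med}(X)=[\underline{\mathrm{med}}(X),\overline{\mathrm{med}}(X)]$ denotes the (closed interval) set of all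 medians of $X$. A support median of $\mathcal{X}$ is any $A\in\mathcal{F}_c(\mathbb{R})$ with $s_A(u,\alpha)\in\mathrm{Med}(s_{\mathcal{X}}(u,\alpha))$ for all $u\in\{-1,1\}$, $\alpha\in[0,1]$; their set is $\mathrm{Med}_s(\mathcal{X})$. The Grzegorzewski median $\mathrm{med}_{Gr}(\mathcal{X})$ is the fuzzy number with membership function $\mathrm{med}_{Gr}(\mathcal{X})(t)=\sup\{\inf_{\omega\in\Omega}\mathcal{X}(\omega)(X(\omega)) : X:\Omega\to\mathbb{R}\text{ Borel measurable},\ t\in\mathrm{Med}(X)\}$; it is known that it is the unique fuzzy number with $(\mathrm{med}_{Gr}(\mathcal{X}))_\alpha=[\underline{\mathrm{med}}(\inf\mathcal{X}_\alpha),\overline{\mathrm{med}}(\sup\mathcal{X}_\alpha)]$ for every $\alpha\in[0,1]$, where $\inf\mathcal{X}_\alpha$ and $\sup\mathcal{X}_\alpha$ denote the real random variables $\omega\mapsto\inf\mathcal{X}(\omega)_\alpha$ and $\omega\mapsto\sup\mathcal{X}(\omega)_\alpha$. *)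

From HB Require Import structures.
From mathcomp Require Import all_boot all_order all_algebra.
From mathcomp Require Import all_classical all_reals all_analysis.
Set Implicit Arguments. Unset Strict Implicit. Unset Printing Implicit Defensive.
Import Order.TTheory GRing.Theory Num.Theory.
Import numFieldNormedType.Exports.
Local Open Scope classical_set_scope.
Local Open Scope ring_scope.

Section Fuzzy.
Context {R : realType}.

Definition level (A : R -> R) (a : R) : set R :=
  if a == 0 then closure [set x | 0 < A x] else [set x | a <= A x].

Definition is_Fc (A : R -> R) : Prop :=
  (forall x, 0 <= A x <= 1) /\
  (forall a, 0 <= a <= 1 -> exists l r : R, l <= r /\ level A a = `[l, r]%classic).

Definition suppf (A : R -> R) (u a : R) : R := sup [set u * v | v in level A a].

Context {d : measure_display} {T : measurableType d}.

Definition is_FRV (X : T -> R -> R) : Prop :=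
  (forall w, is_Fc (X w)) /\
  (forall a, 0 <= a <= 1 -> forall l r : R, l <= r ->
     measurable [set w | level (X w) a `&` `[l, r]%classic !=set0]).

Definition Med (P : probability T R) (Y : T -> R) : set R :=
  [set m | ((2^-1 : R)%:E <= P [set w | (Y w <= m)%R])%E /\
           ((2^-1 : R)%:E <= P [set w | (m <= Y w)%R])%E].

Definition Med_s (P : probability T R) (X : T -> R -> R) : set (R -> R) :=
  [set A | is_Fc A /\ forall u a, (u = -1 \/ u = 1) -> 0 <= a <= 1 ->
       Med P (fun w => suppf (X w) u a) (suppf A u a)].

Definition medGr (P : probability T R) (X : T -> R -> R) : R -> R :=
  fun t => sup [set r | exists Y : T -> R,
     [/\ measurable_fun setT Y, Med P Y t & r = inf (range (fun w => X w (Y w)))]].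

End Fuzzy.

From HB Require Import structures.
From mathcomp Require Import all_boot all_order all_algebra.
From mathcomp Require Import all_classical all_reals all_analysis.
Import Order.TTheory GRing.Theory Num.Theory.
Local Open Scope classical_set_scope.
Local Open Scope ring_scope.

(** Fix x in A_a with a > 0.  Clamping x into the a-level [inf X(w)_a, sup X(w)_a]
    gives a measurable selection Y of the levels of X.  Y <= x wherever
    inf X(w)_a <= inf A_a, and Y >= x wherever sup X(w)_a >= sup A_a; as A is a
    support median, both events have probability at least 1/2, so x is a median
    of Y.  Since X(w)(Y(w)) >= a for every w, Y witnesses medGr(X)(x) >= a.
    The 0-levels follow by taking closures. *)

Section level_support.
Context {R : realType}.
Implicit Types (A B : R -> R) (a : R).

Lemma suppf1 A a : suppf A 1 a = sup (level A a).
Proof.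
rewrite /suppf (_ : (fun v => 1 * v) = id) ?image_id //.
by apply/funext => v; rewrite mul1r.
Qed.

Lemma suppfN1 A a : suppf A (-1) a = - inf (level A a).
Proof.
rewrite /inf opprK /suppf (_ : (fun v => -1 * v) = -%R) //.
by apply/funext => v; rewrite mulN1r.
Qed.

Lemma level_posE A a : 0 < a -> level A a = [set x | a <= A x].
Proof. by move=> a_gt0; rewrite /level gt_eqF. Qed.

Lemma Fc_level_inf_le_sup {A a} : is_Fc A -> 0 <= a <= 1 ->
  inf (level A a) <= sup (level A a).
Proof. by move=> [_ FcA] /FcA[l [r [lr ->]]]; rewrite inf_itvcc ?sup_itvcc. Qed.

Lemma Fc_levelE {A a} : is_Fc A -> 0 <= a <= 1 ->
  level A a = `[inf (level A a), sup (level A a)]%classic.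
Proof. by move=> [_ FcA] /FcA[l [r [lr ->]]]; rewrite inf_itvcc ?sup_itvcc. Qed.

Lemma Fc_levelP {A a} x : is_Fc A -> 0 <= a <= 1 ->
  level A a x <-> inf (level A a) <= x <= sup (level A a).
Proof. by move=> FcA a01; rewrite [X in X x](Fc_levelE FcA a01) /= in_itv. Qed.

Lemma level0_subset A B : (forall x, A x <= 1) ->
  (forall a, 0 < a <= 1 -> level A a `<=` level B a) -> level A 0 `<=` level B 0.
Proof.
move=> A1 AB; rewrite /level eqxx => x; apply: closureS => {}x /= Ax_gt0.
have /AB : 0 < A x <= 1 by rewrite Ax_gt0 A1.
rewrite !level_posE // => /(_ x (lexx _)).
exact: lt_le_trans.
Qed.

End level_support.

Section measurable_real_function.
Context {R : realType} {d : measure_display} {T : measurableType d}.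
Implicit Types f : T -> R.

Lemma measurable_fun_ge_sets f :
  (forall c, measurable [set w | c <= f w]) -> measurable_fun setT f.
Proof.
move=> mf; apply: (measurability _ (measurable_realfun.RGenCInfty.measurableE R)) => //.
by move=> _ [_ [c ->] <-]; rewrite setTI preimage_itvcy.
Qed.

Lemma measurable_fun_le_sets f :
  (forall c, measurable [set w | f w <= c]) -> measurable_fun setT f.
Proof.
move=> mf; rewrite -[f]opprK; apply: measurableT_comp => //.
by apply: measurable_fun_ge_sets => c; under eq_set do rewrite lerNr; exact: mf.
Qed.

Lemma measurable_set_ge f c : measurable_fun setT f -> measurable [set w | c <= f w].
Proof. by move=> mf; rewrite -preimage_itvcy -[_ @^-1` _]setTI; exact: mf. Qed.

Lemma measurable_set_le f c : measurable_fun setT f -> measurable [set w | f w <= c].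
Proof. by move=> mf; rewrite -preimage_itvNyc -[_ @^-1` _]setTI; exact: mf. Qed.

End measurable_real_function.

Section closed_interval.
Context {R : realType}.
Variable L : set R.
Hypotheses (L_le : inf L <= sup L) (LE : L = `[inf L, sup L]%classic).

Lemma itvcc_sup_geP c :
  c <= sup L <-> exists n : nat, (L `&` `[c, c + n%:R]%classic) !=set0.
Proof.
split=> [c_le|[n [v [Lv /andP[cv _]]]]].
  exists (Num.bound (sup L - c)), (sup L); split.
    by rewrite [X in X _]LE /= in_itv /= L_le lexx.
  by rewrite /= in_itv /= c_le -lerBlDl ltW // unstable.ltr_bound.
by move: Lv; rewrite [X in X v]LE /= in_itv /= => /andP[_]; exact: le_trans.
Qed.

Lemma itvcc_inf_leP c :
  inf L <= c <-> exists n : nat, (L `&` `[c - n%:R, c]%classic) !=set0.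
Proof.
split=> [le_c|[n [v [Lv /andP[_ vc]]]]].
  exists (Num.bound (c - inf L)), (inf L); split.
    by rewrite [X in X _]LE /= in_itv /= L_le lexx.
  by rewrite /= in_itv /= le_c andbT lerBlDr -lerBlDl ltW // unstable.ltr_bound.
by move: Lv; rewrite [X in X v]LE /= in_itv /= => /andP[+ _] => /le_trans; apply.
Qed.

End closed_interval.

Section fuzzy_random_variable.
Context {R : realType} {d : measure_display} {T : measurableType d}.
Context {X : T -> R -> R} {a : R}.
Hypotheses (FRV_X : is_FRV X) (a01 : 0 <= a <= 1).

Let inf_le_sup w := Fc_level_inf_le_sup (FRV_X.1 w) a01.
Let levelE w := Fc_levelE (FRV_X.1 w) a01.

Lemma measurable_sup_level : measurable_fun setT (fun w => sup (level (X w) a)).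
Proof.
have [_ mX] := FRV_X; apply: measurable_fun_ge_sets => c.
rewrite (_ : [set w | _] =
    \bigcup_(n in setT) [set w | level (X w) a `&` `[c, c + n%:R]%classic !=set0]).
  by apply: bigcupT_measurable => n; apply: mX; rewrite ?lerDl.
apply/seteqP; split=> w.
  by move/(itvcc_sup_geP _ (inf_le_sup w) (levelE w)) => [n]; exists n.
by move=> [n _ ?]; apply/(itvcc_sup_geP _ (inf_le_sup w) (levelE w)); exists n.
Qed.

Lemma measurable_inf_level : measurable_fun setT (fun w => inf (level (X w) a)).
Proof.
have [_ mX] := FRV_X; apply: measurable_fun_le_sets => c.
rewrite (_ : [set w | _] =
    \bigcup_(n in setT) [set w | level (X w) a `&` `[c - n%:R, c]%classic !=set0]).
  by apply: bigcupT_measurable => n; apply: mX; rewrite ?gerBl.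
apply/seteqP; split=> w.
  by move/(itvcc_inf_leP _ (inf_le_sup w) (levelE w)) => [n]; exists n.
by move=> [n _ ?]; apply/(itvcc_inf_leP _ (inf_le_sup w) (levelE w)); exists n.
Qed.

End fuzzy_random_variable.

Section medians.
Context {R : realType} {d : measure_display} {T : measurableType d}.
Variable P : probability T R.

Lemma measurable_fun_clamp {L U : T -> R} (t : R) :
  measurable_fun setT L -> measurable_fun setT U ->
  measurable_fun setT (fun w => Num.max (L w) (Num.min t (U w))).
Proof.
move=> mL mU; apply: measurable_realfun.measurable_maxr => //.
exact: measurable_realfun.measurable_minr.
Qed.

Lemma Med_clamp {L U : T -> R} {l r t : R} :
  measurable_fun setT L -> measurable_fun setT U -> l <= t <= r ->
  ((2^-1 : R)%:E <= P [set w | (L w <= l)%R])%E ->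
  ((2^-1 : R)%:E <= P [set w | (r <= U w)%R])%E ->
  Med P (fun w => Num.max (L w) (Num.min t (U w))) t.
Proof.
move=> mL mU /andP[lt tr] PL PU.
have mY := measurable_fun_clamp t mL mU.
split.
  apply: (le_trans PL); apply: le_measure; rewrite ?inE; try exact: measurable_set_le.
  by move=> w /= Lw; rewrite ge_max ge_min lexx (le_trans Lw lt).
apply: (le_trans PU); apply: le_measure; rewrite ?inE; try exact: measurable_set_ge.
by move=> w /= Uw; rewrite le_max le_min lexx (le_trans tr Uw) orbT.
Qed.

Lemma medGr_ge (X : T -> R -> R) (Y : T -> R) t b :
  (forall w x, 0 <= X w x <= 1) -> measurable_fun setT Y -> Med P Y t ->
  (forall w, b <= X w (Y w)) -> b <= medGr P X t.
Proof.
move=> X01 mY MY bXY; rewrite /medGr.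
have ub : has_ubound [set r | exists Z : T -> R, [/\ measurable_fun setT Z,
    Med P Z t & r = inf (range (fun w => X w (Z w)))]].
  exists 1 => _ [Z [_ _ ->]].
  have /andP[_ X1] := X01 point (Z point).
  apply: le_trans X1; apply: ge_inf; last by exists point.
  by exists 0 => _ [w _ <-]; have /andP[] := X01 w (Z w).
apply: le_trans (ub_le_sup ub _); last by exists Y.
apply: lb_le_inf; first by exists (X point (Y point)), point.
by move=> _ [w _ <-]; exact: bXY.
Qed.

Lemma Med_s_level_subset (X : T -> R -> R) A a :
  is_FRV X -> Med_s P X A -> 0 < a <= 1 -> level A a `<=` level (medGr P X) a.
Proof.
move=> FRV_X [FcA medA] /andP[a_gt0 a1] x Ax.
have a01 : 0 <= a <= 1 by rewrite ltW.
have lxr := (Fc_levelP x FcA a01).1 Ax.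
have [_] := medA 1 a (or_intror erefl) a01.
under eq_set do rewrite !suppf1; move=> P_hi.
have [_] := medA (-1) a (or_introl erefl) a01.
under eq_set do rewrite !suppfN1 lerN2; move=> P_lo.
pose lo w := inf (level (X w) a); pose hi w := sup (level (X w) a).
pose Y w := Num.max (lo w) (Num.min x (hi w)).
have mlo : measurable_fun setT lo := measurable_inf_level FRV_X a01.
have mhi : measurable_fun setT hi := measurable_sup_level FRV_X a01.
rewrite level_posE //=.
apply: (@medGr_ge X Y) => [w y|||w].
- exact: (FRV_X.1 w).1.
- exact: measurable_fun_clamp.
- exact: Med_clamp mlo mhi lxr P_lo P_hi.
have /(Fc_levelP _ (FRV_X.1 w) a01) : lo w <= Y w <= hi w.
  rewrite le_max ge_max ge_min !lexx orbT /= andbT.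
  exact: Fc_level_inf_le_sup (FRV_X.1 w) a01.
by rewrite level_posE.
Qed.

End medians.

Theorem proposition3p2 (R : realType) (d : measure_display) (T : measurableType d)
  (P : probability T R) (X : T -> R -> R) :
  is_FRV X ->
  forall A : R -> R, Med_s P X A ->
  forall a : R, 0 <= a <= 1 -> level A a `<=` level (medGr P X) a.
Proof.
move=> FRV_X A medA a /andP[a_ge0 a1].
have pos_levels b : 0 < b <= 1 -> level A b `<=` level (medGr P X) b.
  exact: Med_s_level_subset.
have [->|a_neq0] := eqVneq a 0.
  by apply: level0_subset pos_levels => x; have /andP[] := medA.1.1 x.
by apply: pos_levels; rewrite lt_neqAle eq_sym a_neq0 a_ge0.
Qed.
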